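(* Let $R$ be an associative ring with identity, let $a,b,c,y\in R$ and suppose that both $b$ and $c$ are regular. Then the following are equivalent: (i) $y$ is the $(b,c)$-inverse of $a$; (ii) $y$ is a hybrid $(b,c)$-inverse of $a$; (iii) $y$ is an annihilator $(b,c)$-inverse of $a$.
   Context: For $a,b,c\in R$, $y$ is the $(b,c)$-inverse of $a$ if $y\in (bRy)\cap(yRc)$, $yab=b$ and $cay=c$ (such $y$ is unique). $y$ is a hybrid $(b,c)$-inverse of $a$ if $yay=y$, $yR=bR$ and $r(y)=r(c)$. $y$ is an annihilator $(b,c)$-inverse of $a$ if $yay=y$, $l(y)=l(b)$ and $r(y)=r(c)$. Here $l(x)=\{z\in R:zx=0\}$, $r(x)=\{z\in R:xz=0\}$, $xR=\{xz:z\in R\}$. An element is regular if $x=xzx$ for some $z\in R$. *)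

From HB Require Import structures.
From mathcomp Require Import all_boot all_order all_algebra.
Set Implicit Arguments. Unset Strict Implicit. Unset Printing Implicit Defensive.
Import GRing.Theory.
Local Open Scope ring_scope.

(* R : pzRingType = associative ring with identity (zero ring allowed). *)

Definition regular {R : pzRingType} (x : R) : Prop := exists z : R, x = x * z * x.

(* l(x) = {z | z x = 0}, r(x) = {z | x z = 0}; equality of such sets = pointwise iff *)
Definition lann_eq {R : pzRingType} (x x' : R) : Prop :=
  forall z : R, z * x = 0 <-> z * x' = 0.
Definition rann_eq {R : pzRingType} (x x' : R) : Prop :=
  forall z : R, x * z = 0 <-> x' * z = 0.
Definition rideal_eq {R : pzRingType} (x x' : R) : Prop :=
  forall w : R, (exists z, w = x * z) <-> (exists z, w = x' * z).

Definition bc_inverse {R : pzRingType} (a b c y : R) : Prop :=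
  (exists s, y = b * s * y) /\ (exists t, y = y * t * c) /\
  y * a * b = b /\ c * a * y = c.

Definition hybrid_bc_inverse {R : pzRingType} (a b c y : R) : Prop :=
  y * a * y = y /\ rideal_eq y b /\ rann_eq y c.

Definition annihilator_bc_inverse {R : pzRingType} (a b c y : R) : Prop :=
  y * a * y = y /\ lann_eq y b /\ rann_eq y c.

From HB Require Import structures.
From mathcomp Require Import all_boot all_order all_algebra.
Set Implicit Arguments.
Unset Strict Implicit.
Unset Printing Implicit Defensive.
Local Open Scope ring_scope.
Import GRing.Theory.

(* An inclusion of annihilators transfers one-sided identities: [p = p e]
   says that [1 - e] lies in the right annihilator of [p], so if r(p) is
   contained in r(q) then also [q = q e].  Regularity of [b] and [c] and the
   equation [y a y = y] supply the identities [b = (b x) b], [c = c (w c)] and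
   [y = (y a) y], from which [y a b = b], [c a y = c], [y = y w c] and the
   equality of principal right ideals follow. *)

Section Annihilators.

Variable R : pzRingType.
Implicit Types p q e : R.

Lemma rann_sub_mulr p q e :
  (forall z, p * z = 0 -> q * z = 0) -> p = p * e -> q = q * e.
Proof.
move=> pq pe; apply/eqP; rewrite eq_sym -subr_eq0 -[X in _ - X]mulr1 -mulrBr.
by apply/eqP/pq; rewrite mulrBr mulr1 -pe subrr.
Qed.

Lemma lann_sub_mull p q e :
  (forall z, z * p = 0 -> z * q = 0) -> p = e * p -> q = e * q.
Proof.
move=> pq pe; apply/eqP; rewrite eq_sym -subr_eq0 -[X in _ - X]mul1r -mulrBl.
by apply/eqP/pq; rewrite mulrBl mul1r -pe subrr.
Qed.

Lemma rideal_eqP (x x' : R) :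
  rideal_eq x x' <-> (exists u, x = x' * u) /\ (exists v, x' = x * v).
Proof.
split=> [xx' | [[u xu] [v x'v]] w].
  by split; apply/xx'; exists 1; rewrite mulr1.
split=> [[z ->] | [z ->]].
  by exists (u * z); rewrite xu mulrA.
by exists (v * z); rewrite x'v mulrA.
Qed.

Lemma rideal_eq_lann_eq (x x' : R) : rideal_eq x x' -> lann_eq x x'.
Proof.
move=> /rideal_eqP[[u xu] [v x'v]] z.
by split=> zx0; [rewrite x'v | rewrite xu]; rewrite mulrA zx0 mul0r.
Qed.

Lemma lann_eq_rideal_eq (x x' : R) :
  regular x -> regular x' -> lann_eq x x' -> rideal_eq x x'.
Proof.
move=> [u xu] [v x'v] xx'; apply/rideal_eqP; split.
  by exists (v * x); rewrite mulrA; apply: lann_sub_mull x'v => z /xx'.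
by exists (u * x'); rewrite mulrA; apply: lann_sub_mull xu => z /xx'.
Qed.

End Annihilators.

Section BCInverses.

Variables (R : pzRingType) (a b c y : R).

Lemma bc_inverse_hybrid : bc_inverse a b c y -> hybrid_bc_inverse a b c y.
Proof.
move=> [[s ys] [[t yt] [yab cay]]].
have yay : y * a * y = y by rewrite {2}ys !mulrA yab -ys.
split=> //; split.
  by apply/rideal_eqP; split; [exists (s * y) | exists (a * b)];
     rewrite mulrA ?yab -?ys.
move=> z; split=> [yz0 | cz0].
  by rewrite -cay -mulrA yz0 mulr0.
by rewrite yt -!mulrA cz0 !mulr0.
Qed.

Lemma hybrid_bc_inverse_bc : regular c ->
  hybrid_bc_inverse a b c y -> bc_inverse a b c y.
Proof.
move=> [w cw] [yay [/rideal_eqP[[v yv] [u bu]] yc]].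
split; first by exists (v * a); rewrite -[in LHS]yay {1}yv !mulrA.
split.
  exists w; rewrite -mulrA; apply: (rann_sub_mulr (p := c)) => [z /yc //|].
  by rewrite mulrA.
split; first by rewrite bu !mulrA yay.
rewrite -mulrA; apply/esym/(rann_sub_mulr (p := y)) => [z /yc //|].
by rewrite mulrA.
Qed.

Lemma hybrid_annihilator_bc_inverseE : regular b ->
  hybrid_bc_inverse a b c y <-> annihilator_bc_inverse a b c y.
Proof.
move=> rb; split=> [[yay [yb yc]] | [yay [yb yc]]].
  by split=> //; split=> //; apply: rideal_eq_lann_eq.
split=> //; split=> //; apply: lann_eq_rideal_eq => //.
by exists a; rewrite yay.
Qed.

End BCInverses.

Theorem theorem3p11 (R : pzRingType) (a b c y : R)
  (hb : regular b) (hc : regular c) :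
  (bc_inverse a b c y <-> hybrid_bc_inverse a b c y) /\
  (hybrid_bc_inverse a b c y <-> annihilator_bc_inverse a b c y).
Proof.
split; last exact: hybrid_annihilator_bc_inverseE.
by split; [apply: bc_inverse_hybrid | apply: hybrid_bc_inverse_bc].
Qed.
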